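(* Let $\mathbb{T}=\mathbb{R}/\mathbb{Z}$, let $u:\mathbb{T}\times[0,T]\to\mathbb{R}$ be smooth and $\varphi_0\in C^1(\mathbb{T})$. Consider the grid CIP scheme: $F_j^0=\varphi_0(x_j)$, $G_j^0=\varphi_0'(x_j)$; given $\{F_j^n,G_j^n\}_{j=0}^{M-1}$, let $\varphi_h^n\in V_h$ be the unique function with $\varphi_h^n(x_j)=F_j^n$, $(\varphi_h^n)'(x_j)=G_j^n$; compute, with $\boldsymbol{u}(y_0,y_1,t)=(u(y_0,t),\,y_1u_x(y_0,t))$ and $\boldsymbol{y}_j=(x_j,1)$, $\boldsymbol{k}_{j,1}^n=\boldsymbol{u}(\boldsymbol{y}_j,t^{n+1})$, $\boldsymbol{k}_{j,2}^n=\boldsymbol{u}(\boldsymbol{y}_j-\tfrac{\Delta t_n}{2}\boldsymbol{k}_{j,1}^n,t^{n+1}-\tfrac{\Delta t_n}{2})$, $\boldsymbol{k}_{j,3}^n=\boldsymbol{u}(\boldsymbol{y}_j-\Delta t_n(-\boldsymbol{k}_{j,1}^n+2\boldsymbol{k}_{j,2}^n),t^{n+1}-\Delta t_n)$, $(X_{0,j}^n,X_{1,j}^n)=\boldsymbol{y}_j-\Delta t_n(\tfrac16\boldsymbol{k}_{j,1}^n+\tfrac46\boldsymbol{k}_{j,2}^n+\tfrac16\boldsymbol{k}_{j,3}^n)$; and set $F_j^{n+1}=\varphi_h^n(X_{0,j}^n)$, $G_j^{n+1}=X_{1,j}^n\,(\varphi_h^n)'(X_{0,j}^n)$, $j=0,\dots,M-1$.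 Then the functions $\varphi_h^n$ satisfy $\varphi_h^0=\mathcal{I}_h\varphi_0$ and $\varphi_h^{n+1}=\mathcal{I}_h(\varphi_h^n\circ X^n)$ for $n=0,1,\dots,N-1$.
   Context: Temporal mesh $0=t^0<\dots<t^N=T$, $\Delta t_n=t^{n+1}-t^n$; spatial mesh $0=x_0<\dots<x_M=1$. $V_h$: $C^1(\mathbb{T})$ functions, cubic on each $[x_j,x_{j+1}]$. $\mathcal{I}_h:C^1(\mathbb{T})\to V_h$: $(\mathcal{I}_hg)(x_j)=g(x_j)$, $(\mathcal{I}_hg)'(x_j)=g'(x_j)$, $j=0,\dots,M-1$. $X^n:\mathbb{T}\to\mathbb{T}$: $k_1^n(x)=u(x,t^{n+1})$, $k_2^n(x)=u(x-\tfrac{\Delta t_n}{2}k_1^n(x),t^{n+1}-\tfrac{\Delta t_n}{2})$, $k_3^n(x)=u(x-\Delta t_n(-k_1^n(x)+2k_2^n(x)),t^{n+1}-\Delta t_n)$, $X^n(x)=x-\Delta t_n(\tfrac16k_1^n(x)+\tfrac46k_2^n(x)+\tfrac16k_3^n(x))$. *)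

From Stdlib Require Import Reals Lra ClassicalEpsilon.
From Coquelicot Require Import Coquelicot.
Open Scope R_scope.

(* Functions on the torus T = R/Z are represented as 1-periodic functions R -> R. *)
Definition periodic1 (f : R -> R) : Prop := forall y, f (y + 1) = f y.

Definition C1T (f : R -> R) : Prop :=
  periodic1 f /\ (forall y, ex_derive f y) /\ (forall y, continuous (Derive f) y).

Definition in_Vh (M : nat) (x : nat -> R) (f : R -> R) : Prop :=
  C1T f /\
  forall j, (j < M)%nat ->
    exists a b c d : R, forall y, x j <= y <= x (S j) ->
      f y = a + b * y + c * y ^ 2 + d * y ^ 3.

(* The function of V_h with nodal values F_j and nodal derivatives G_j, j < M
   (the paper proves it exists uniquely; we select it by Hilbert's epsilon). *)
Definition hermite (M : nat) (x : nat -> R) (F G : nat -> R) : R -> R :=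
  epsilon (inhabits (fun _ : R => 0))
    (fun f => in_Vh M x f /\
       forall j, (j < M)%nat -> f (x j) = F j /\ Derive f (x j) = G j).

Definition Ih (M : nat) (x : nat -> R) (g : R -> R) : R -> R :=
  hermite M x (fun j => g (x j)) (fun j => Derive g (x j)).

Definition ux (u : R -> R -> R) (y s : R) : R := Derive (fun z => u z s) y.

Definition dt (t : nat -> R) (n : nat) : R := t (S n) - t n.

Definition Xmap (u : R -> R -> R) (t : nat -> R) (n : nat) (y : R) : R :=
  let h := dt t n in
  let k1 := u y (t (S n)) in
  let k2 := u (y - h / 2 * k1) (t (S n) - h / 2) in
  let k3 := u (y - h * (- k1 + 2 * k2)) (t (S n) - h) in
  y - h * (1/6 * k1 + 4/6 * k2 + 1/6 * k3).

Definition ubold (u : R -> R -> R) (y : R * R) (s : R) : R * R :=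
  (u (fst y) s, snd y * ux u (fst y) s).
Definition vadd (a b : R * R) : R * R := (fst a + fst b, snd a + snd b).
Definition vscal (c : R) (a : R * R) : R * R := (c * fst a, c * snd a).

Definition Xgrid (u : R -> R -> R) (t : nat -> R) (x : nat -> R) (n j : nat)
  : R * R :=
  let h := dt t n in
  let yj := (x j, 1) in
  let k1 := ubold u yj (t (S n)) in
  let k2 := ubold u (vadd yj (vscal (- (h / 2)) k1)) (t (S n) - h / 2) in
  let k3 := ubold u (vadd yj (vscal (- h) (vadd (vscal (-1) k1) (vscal 2 k2))))
                 (t (S n) - h) in
  vadd yj (vscal (- h)
     (vadd (vadd (vscal (1/6) k1) (vscal (4/6) k2)) (vscal (1/6) k3))).

From Stdlib Require Import Reals Lra Lia.
From Stdlib Require Import ClassicalEpsilon PropExtensionality FunctionalExtensionality.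
From Coquelicot Require Import Coquelicot.
Open Scope R_scope.

(* The derivative update of the scheme is the chain rule in disguise: the second
   components of the Runge-Kutta stages for bold u are the derivatives, with respect
   to the foot x_j, of the first components.  Hence X_{0,j}^n = X^n(x_j),
   X_{1,j}^n = (X^n)'(x_j) and G_j^{n+1} = (phi_h^n o X^n)'(x_j), so both sides of the
   claim are the element of V_h selected from the same nodal data.  The analytic input
   is that phi_h^n is differentiable, i.e. that the periodic C^1 piecewise cubic
   Hermite interpolant exists: glue the cubic Hermite pieces of the cells
   [x_j + m, x_{j+1} + m]; adjacent pieces share value and slope at their common node,
   so the glued function is differentiable and its derivative is the (continuous)
   glued derivative. *)

Definition cubic (a c0 c1 c2 c3 y : R) : R :=
  c0 + c1 * (y - a) + c2 * (y - a) ^ 2 + c3 * (y - a) ^ 3.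

Definition cubic' (a c1 c2 c3 y : R) : R :=
  c1 + 2 * c2 * (y - a) + 3 * c3 * (y - a) ^ 2.

Lemma is_derive_cubic a c0 c1 c2 c3 y :
  is_derive (cubic a c0 c1 c2 c3) y (cubic' a c1 c2 c3 y).
Proof. unfold cubic, cubic'. auto_derive; [easy | ring]. Qed.

Lemma continuous_cubic' a c1 c2 c3 y : continuous (cubic' a c1 c2 c3) y.
Proof.
  apply (ex_derive_continuous (V := R_NormedModule)). unfold cubic'. auto_derive. easy.
Qed.

Lemma cubic_expand a c0 c1 c2 c3 : exists A B C D, forall y,
  cubic a c0 c1 c2 c3 y = A + B * y + C * y ^ 2 + D * y ^ 3.
Proof.
  exists (c0 - c1 * a + c2 * a ^ 2 - c3 * a ^ 3), (c1 - 2 * c2 * a + 3 * c3 * a ^ 2),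
    (c2 - 3 * c3 * a), c3.
  intro y. unfold cubic. ring.
Qed.

Definition hermite_cubic (a b f0 g0 f1 g1 : R) : R -> R :=
  cubic a f0 g0 ((3 * (f1 - f0) / (b - a) - 2 * g0 - g1) / (b - a))
    ((g0 + g1 - 2 * (f1 - f0) / (b - a)) / (b - a) ^ 2).

Definition hermite_cubic' (a b f0 g0 f1 g1 : R) : R -> R :=
  cubic' a g0 ((3 * (f1 - f0) / (b - a) - 2 * g0 - g1) / (b - a))
    ((g0 + g1 - 2 * (f1 - f0) / (b - a)) / (b - a) ^ 2).

Lemma hermite_cubic_left a b f0 g0 f1 g1 : hermite_cubic a b f0 g0 f1 g1 a = f0.
Proof. unfold hermite_cubic, cubic. ring. Qed.

Lemma hermite_cubic'_left a b f0 g0 f1 g1 : hermite_cubic' a b f0 g0 f1 g1 a = g0.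
Proof. unfold hermite_cubic', cubic'. ring. Qed.

Lemma hermite_cubic_right a b f0 g0 f1 g1 :
  a <> b -> hermite_cubic a b f0 g0 f1 g1 b = f1.
Proof. intro Hab. unfold hermite_cubic, cubic. field. lra. Qed.

Lemma hermite_cubic'_right a b f0 g0 f1 g1 :
  a <> b -> hermite_cubic' a b f0 g0 f1 g1 b = g1.
Proof. intro Hab. unfold hermite_cubic', cubic'. field. lra. Qed.

Lemma is_derive_piecewise (f fl fr : R -> R) (y dl dr l : R) :
  0 < dl -> 0 < dr ->
  (forall z, y - dl <= z <= y -> f z = fl z) ->
  (forall z, y <= z <= y + dr -> f z = fr z) ->
  is_derive fl y l -> is_derive fr y l -> is_derive f y l.
Proof.
  intros Hdl Hdr Hl Hr Dl Dr. apply is_derive_Reals. apply is_derive_Reals in Dl, Dr.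
  intros eps Heps. destruct (Dl eps Heps) as [a Ha], (Dr eps Heps) as [b Hb].
  assert (Hd : 0 < Rmin (Rmin dl dr) (Rmin a b)).
  { repeat apply Rmin_pos; auto; apply cond_pos. }
  exists (mkposreal _ Hd). simpl. intros h Hh0 Hh.
  apply Rabs_def2 in Hh as [Hh1 Hh2].
  pose proof (Rmin_l (Rmin dl dr) (Rmin a b)). pose proof (Rmin_r (Rmin dl dr) (Rmin a b)).
  pose proof (Rmin_l dl dr). pose proof (Rmin_r dl dr).
  pose proof (Rmin_l a b). pose proof (Rmin_r a b).
  destruct (Rle_dec h 0).
  - rewrite (Hl (y + h)), (Hl y) by lra. apply Ha; auto. apply Rabs_def1; lra.
  - rewrite (Hr (y + h)), (Hr y) by lra. apply Hb; auto. apply Rabs_def1; lra.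
Qed.

Lemma continuous_piecewise (f fl fr : R -> R) (y dl dr : R) :
  0 < dl -> 0 < dr ->
  (forall z, y - dl <= z <= y -> f z = fl z) ->
  (forall z, y <= z <= y + dr -> f z = fr z) ->
  continuous fl y -> continuous fr y -> continuous f y.
Proof.
  intros Hdl Hdr Hl Hr Cl Cr. apply continuity_pt_filterlim.
  apply continuity_pt_filterlim in Cl, Cr.
  intros eps Heps. destruct (Cl eps Heps) as [a [Ha HA]], (Cr eps Heps) as [b [Hb HB]].
  exists (Rmin (Rmin dl dr) (Rmin a b)). split.
  { repeat apply Rmin_pos; lra. }
  intros z [Hzy Hz]. simpl in *. unfold R_dist in *.
  apply Rabs_def2 in Hz as [Hz1 Hz2].
  pose proof (Rmin_l (Rmin dl dr) (Rmin a b)). pose proof (Rmin_r (Rmin dl dr) (Rmin a b)).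
  pose proof (Rmin_l dl dr). pose proof (Rmin_r dl dr).
  pose proof (Rmin_l a b). pose proof (Rmin_r a b).
  destruct (Rle_dec z y).
  - rewrite (Hl z), (Hl y) by lra. apply HA. split; [exact Hzy|]. apply Rabs_def1; lra.
  - rewrite (Hr z), (Hr y) by lra. apply HB. split; [exact Hzy|]. apply Rabs_def1; lra.
Qed.

Lemma find_cell_right (x : nat -> R) s n :
  x O <= s < x n -> exists j, (j < n)%nat /\ x j <= s < x (S j).
Proof.
  induction n as [|n IH]; intros [H0 Hn]; [lra|].
  destruct (Rle_dec (x n) s) as [Hle|Hgt].
  - exists n. split; [lia | lra].
  - destruct IH as [j [Hj Hs]]; [lra|]. exists j. split; [lia | exact Hs].
Qed.

Lemma find_cell_left (x : nat -> R) s n :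
  x O < s <= x n -> exists j, (j < n)%nat /\ x j < s <= x (S j).
Proof.
  induction n as [|n IH]; intros [H0 Hn]; [lra|].
  destruct (Rlt_dec (x n) s) as [Hlt|Hge].
  - exists n. split; [lia | lra].
  - destruct IH as [j [Hj Hs]]; [lra|]. exists j. split; [lia | exact Hs].
Qed.

Lemma is_derive_shift (f : R -> R) c y l :
  is_derive f (y - c) l -> is_derive (fun z => f (z - c)) y l.
Proof.
  intro Df.
  assert (Dshift : is_derive (fun z => z - c) y 1) by (auto_derive; [easy | ring]).
  pose proof (is_derive_comp f _ y l 1 Df Dshift) as D.
  unfold scal in D; simpl in D; unfold mult in D; simpl in D.
  rewrite Rmult_1_l in D. exact D.
Qed.

Lemma continuous_shift (f : R -> R) c y :
  continuous f (y - c) -> continuous (fun z => f (z - c)) y.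
Proof.
  intro Cf. apply (continuous_comp (fun z => z - c) f); [|exact Cf].
  apply (ex_derive_continuous (V := R_NormedModule)). auto_derive. easy.
Qed.

Lemma mesh_le (M : nat) (x : nat -> R) :
  (forall j, (j < M)%nat -> x j < x (S j)) ->
  forall i k, (i <= k <= M)%nat -> x i <= x k.
Proof.
  intros Hx i k [Hik HkM]. induction Hik as [|k Hik IH]; [lra|].
  apply Rle_trans with (x k); [apply IH; lia | left; apply Hx; lia].
Qed.

Section PeriodicMesh.

Variables (M : nat) (x : nat -> R).
Hypothesis HM : (0 < M)%nat.
Hypothesis Hx0 : x O = 0.
Hypothesis HxM : x M = 1.
Hypothesis Hx : forall j, (j < M)%nat -> x j < x (S j).

Lemma mesh_cell_bounds j : (j < M)%nat -> 0 <= x j /\ x (S j) <= 1.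
Proof.
  intro Hj. rewrite <- Hx0, <- HxM. split; apply (mesh_le M); auto; lia.
Qed.

Lemma cell_right_of y : exists j m, (j < M)%nat /\ x j + IZR m <= y < x (S j) + IZR m.
Proof.
  destruct (base_fp y) as [Hf0 Hf1].
  destruct (find_cell_right x (frac_part y) M) as [j [Hj Hs]]; [lra|].
  exists j, (Int_part y). split; [exact Hj|].
  pose proof (Rplus_Int_part_frac_part y). lra.
Qed.

Lemma cell_left_of y : exists j m, (j < M)%nat /\ x j + IZR m < y <= x (S j) + IZR m.
Proof.
  (* [- up (- y)] is the largest integer below [y], strictly. *)
  destruct (archimed (- y)) as [Hu1 Hu2].
  destruct (find_cell_left x (y + IZR (up (- y))) M) as [j [Hj Hs]]; [lra|].
  exists j, (- up (- y))%Z. rewrite opp_IZR. split; [exact Hj | lra].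
Qed.

(* [S j mod M] wraps the last cell onto the first: as [x M = x O + 1], the condition
   at [j = M - 1] matches piece [M - 1] with piece [O] shifted by one period. *)
Definition compatible (h : nat -> R -> R) : Prop :=
  forall j, (j < M)%nat -> h j (x (S j)) = h (S j mod M) (x (S j mod M)).

Fixpoint select_piece (h : nat -> R -> R) (k : nat) (s : R) : R :=
  match k with
  | O => h O s
  | S k' => if Rle_dec (x (S k')) s then h (S k') s else select_piece h k' s
  end.

Definition glue (h : nat -> R -> R) (y : R) : R := select_piece h (M - 1) (frac_part y).

Lemma select_piece_eq h j k s :
  (j <= k)%nat -> x j <= s -> (forall i, (j < i <= k)%nat -> s < x i) ->
  select_piece h k s = h j s.
Proof.
  induction k as [|k IH]; intros Hjk Hs Hi.
  - replace j with O by lia. reflexivity.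
  - simpl. destruct (Rle_dec (x (S k)) s) as [Hle|Hgt].
    + destruct (Nat.eq_dec j (S k)) as [->|Hne]; [reflexivity|].
      assert (s < x (S k)) by (apply Hi; lia). lra.
    + destruct (Nat.eq_dec j (S k)) as [->|Hne]; [contradiction|].
      apply IH; [lia | exact Hs | intros i Hi'; apply Hi; lia].
Qed.

Lemma select_piece_on_cell h j s :
  compatible h -> (j < M)%nat -> x j <= s <= x (S j) -> select_piece h (M - 1) s = h j s.
Proof.
  intros Ch Hj [Hs1 [Hs2 | ->]].
  - apply select_piece_eq; [lia | exact Hs1 |].
    intros i Hi. apply Rlt_le_trans with (x (S j));
      [exact Hs2 | apply (mesh_le M); auto; lia].
  - destruct (Nat.eq_dec (S j) M) as [HSj|HSj].
    + replace (M - 1)%nat with j by lia.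
      apply select_piece_eq; [lia | lra | intros; lia].
    + rewrite (Ch j Hj), Nat.mod_small by lia.
      apply select_piece_eq; [lia | lra |].
      intros i Hi. apply Rlt_le_trans with (x (S (S j)));
        [apply Hx; lia | apply (mesh_le M); auto; lia].
Qed.

Lemma select_piece_wrap h :
  compatible h -> select_piece h (M - 1) (x M) = select_piece h (M - 1) (x O).
Proof.
  intro Ch. assert (HM1 : S (M - 1) = M) by lia.
  assert (Hfirst : select_piece h (M - 1) (x O) = h O (x O)).
  { apply select_piece_on_cell; [exact Ch | exact HM |]. pose proof (Hx O HM). lra. }
  assert (Hlast : select_piece h (M - 1) (x M) = h (M - 1)%nat (x (S (M - 1)))).
  { rewrite HM1. apply select_piece_on_cell; [exact Ch | lia |].
    rewrite HM1. split; [apply (mesh_le M); auto; lia | lra]. }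
  rewrite Hfirst, Hlast, (Ch (M - 1)%nat), HM1, Nat.Div0.mod_same by lia.
  reflexivity.
Qed.

Lemma glue_on_cell h j (m : Z) z :
  compatible h -> (j < M)%nat -> x j <= z - IZR m <= x (S j) -> glue h z = h j (z - IZR m).
Proof.
  intros Ch Hj Hz. destruct (mesh_cell_bounds j Hj) as [Hj0 Hj1].
  unfold glue. rewrite <- (select_piece_on_cell h j) by easy.
  destruct (Rlt_dec (z - IZR m) 1) as [Hlt|Hge].
  - destruct (Int_part_frac_part_spec z m (z - IZR m)) as [_ <-]; [lra | lra | reflexivity].
  - destruct (Int_part_frac_part_spec z (m + 1) 0) as [_ <-];
      [lra | rewrite plus_IZR; lra |].
    replace (z - IZR m) with (x M) by lra.
    rewrite select_piece_wrap, Hx0 by exact Ch. reflexivity.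
Qed.

Lemma glue_periodic h : periodic1 (glue h).
Proof.
  intro y. unfold glue. f_equal.
  destruct (base_fp y) as [Hf0 Hf1].
  destruct (Int_part_frac_part_spec (y + 1) (Int_part y + 1) (frac_part y)) as [_ <-];
    [lra | rewrite plus_IZR, (Rplus_Int_part_frac_part y) at 1; lra | reflexivity].
Qed.

Lemma is_derive_glue h h' :
  compatible h -> compatible h' ->
  (forall j y, (j < M)%nat -> is_derive (h j) y (h' j y)) ->
  forall y, is_derive (glue h) y (glue h' y).
Proof.
  intros Ch Ch' Dh y.
  destruct (cell_left_of y) as [jl [ml [Hjl Hl]]], (cell_right_of y) as [jr [mr [Hjr Hr]]].
  apply (is_derive_piecewise _ (fun z => h jl (z - IZR ml)) (fun z => h jr (z - IZR mr))
           y (y - (x jl + IZR ml)) (x (S jr) + IZR mr - y)); try lra.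
  - intros z Hz. apply glue_on_cell; [easy | easy | lra].
  - intros z Hz. apply glue_on_cell; [easy | easy | lra].
  - rewrite (glue_on_cell h' jl ml) by (easy || lra). apply is_derive_shift, Dh, Hjl.
  - rewrite (glue_on_cell h' jr mr) by (easy || lra). apply is_derive_shift, Dh, Hjr.
Qed.

Lemma continuous_glue h :
  compatible h -> (forall j y, (j < M)%nat -> continuous (h j) y) ->
  forall y, continuous (glue h) y.
Proof.
  intros Ch Cont y.
  destruct (cell_left_of y) as [jl [ml [Hjl Hl]]], (cell_right_of y) as [jr [mr [Hjr Hr]]].
  apply (continuous_piecewise _ (fun z => h jl (z - IZR ml)) (fun z => h jr (z - IZR mr))
           y (y - (x jl + IZR ml)) (x (S jr) + IZR mr - y)); try lra.
  - intros z Hz. apply glue_on_cell; [easy | easy | lra].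
  - intros z Hz. apply glue_on_cell; [easy | easy | lra].
  - apply continuous_shift, Cont, Hjl.
  - apply continuous_shift, Cont, Hjr.
Qed.

Lemma glue_on_mesh_cell h j y :
  compatible h -> (j < M)%nat -> x j <= y <= x (S j) -> glue h y = h j y.
Proof.
  intros Ch Hj Hy. rewrite (glue_on_cell h j 0) by (easy || lra). f_equal. ring.
Qed.

Lemma hermite_interpolant_exists (F G : nat -> R) :
  exists f, in_Vh M x f /\
    forall j, (j < M)%nat -> f (x j) = F j /\ Derive f (x j) = G j.
Proof.
  pose (p j := hermite_cubic (x j) (x (S j)) (F j) (G j) (F (S j mod M)) (G (S j mod M))).
  pose (p' j := hermite_cubic' (x j) (x (S j)) (F j) (G j) (F (S j mod M)) (G (S j mod M))).
  assert (Hne : forall j, (j < M)%nat -> x j <> x (S j)).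
  { intros j Hj. specialize (Hx j Hj). lra. }
  assert (Cp : compatible p).
  { intros j Hj. unfold p. rewrite hermite_cubic_right, hermite_cubic_left by auto.
    reflexivity. }
  assert (Cp' : compatible p').
  { intros j Hj. unfold p'. rewrite hermite_cubic'_right, hermite_cubic'_left by auto.
    reflexivity. }
  assert (Dglue : forall y, is_derive (glue p) y (glue p' y)).
  { apply is_derive_glue; [exact Cp | exact Cp' | intros; apply is_derive_cubic]. }
  assert (Derive_glue : forall y, Derive (glue p) y = glue p' y).
  { intro y. apply is_derive_unique, Dglue. }
  assert (cubic_expand_hermite : forall j, exists A B C D, forall y,
            p j y = A + B * y + C * y ^ 2 + D * y ^ 3) by (intro; apply cubic_expand).
  exists (glue p). split; [split; [split; [|split]|] |].
  - apply glue_periodic.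
  - intro y. eexists. apply Dglue.
  - intro y. apply (continuous_ext (glue p')); [intro; symmetry; apply Derive_glue |].
    apply continuous_glue; [exact Cp' | intros; apply continuous_cubic'].
  - intros j Hj. destruct (cubic_expand_hermite j) as [A [B [C [D Hp]]]].
    exists A, B, C, D. intros y Hy. rewrite (glue_on_mesh_cell p j) by easy. apply Hp.
  - intros j Hj. assert (Hxj : x j <= x j <= x (S j)) by (specialize (Hx j Hj); lra).
    rewrite Derive_glue, (glue_on_mesh_cell p j), (glue_on_mesh_cell p' j) by easy.
    split; [apply hermite_cubic_left | apply hermite_cubic'_left].
Qed.

Lemma hermite_in_Vh F G : in_Vh M x (hermite M x F G).
Proof.
  apply (epsilon_spec (inhabits (fun _ : R => 0))
    (fun f => in_Vh M x f /\
       forall j, (j < M)%nat -> f (x j) = F j /\ Derive f (x j) = G j)).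
  apply hermite_interpolant_exists.
Qed.

End PeriodicMesh.

Lemma hermite_ext M x F G F' G' :
  (forall j, (j < M)%nat -> F j = F' j /\ G j = G' j) ->
  hermite M x F G = hermite M x F' G'.
Proof.
  intro HFG. unfold hermite. f_equal. apply functional_extensionality. intro f.
  apply propositional_extensionality.
  split; intros [Hf Hnodes]; split; [exact Hf | | exact Hf |]; intros j Hj;
    destruct (HFG j Hj), (Hnodes j Hj); split; congruence.
Qed.

Section RungeKuttaStages.

Variables (u : R -> R -> R) (t : nat -> R) (n : nat).

Let h := dt t n.

Lemma Xgrid_fst x j : fst (Xgrid u t x n j) = Xmap u t n (x j).
Proof.
  unfold Xgrid, Xmap, ubold, vadd, vscal; simpl. fold h.
  set (k1 := u (x j) (t (S n))).
  replace (x j + - (h / 2) * k1) with (x j - h / 2 * k1) by ring.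
  set (k2 := u (x j - h / 2 * k1) (t (S n) - h / 2)).
  replace (x j + - h * (-1 * k1 + 2 * k2)) with (x j - h * (- k1 + 2 * k2)) by ring.
  ring.
Qed.

Lemma is_derive_Xmap x j :
  (forall s z, t n <= s <= t (S n) -> ex_derive (fun w => u w s) z) -> t n <= t (S n) ->
  is_derive (Xmap u t n) (x j) (snd (Xgrid u t x n j)).
Proof.
  intros Du Ht.
  unfold Xgrid, Xmap, ubold, vadd, vscal, ux; simpl. fold h.
  set (k1 := u (x j) (t (S n))).
  replace (x j + - (h / 2) * k1) with (x j - h / 2 * k1) by ring.
  set (k2 := u (x j - h / 2 * k1) (t (S n) - h / 2)).
  replace (x j + - h * (-1 * k1 + 2 * k2)) with (x j - h * (- k1 + 2 * k2)) by ring.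
  auto_derive.
  - repeat split; apply Du; unfold h, dt; lra.
  - subst k1 k2. unfold Rminus. ring.
Qed.

End RungeKuttaStages.

Theorem lemma1 (N M : nat) (T : R) (t x : nat -> R) (u : R -> R -> R)
  (phi0 : R -> R) (F G : nat -> nat -> R) :
  (* temporal mesh 0 = t^0 < ... < t^N = T *)
  t 0%nat = 0 -> t N = T -> (forall n, (n < N)%nat -> t n < t (S n)) ->
  (* spatial mesh 0 = x_0 < ... < x_M = 1 *)
  (0 < M)%nat -> x 0%nat = 0 -> x M = 1 ->
  (forall j, (j < M)%nat -> x j < x (S j)) ->
  (* u : T x [0,T] -> R smooth (1-periodic and C^infinity in space) *)
  (forall s, 0 <= s <= T -> periodic1 (fun y => u y s)) ->
  (forall s, 0 <= s <= T -> forall k y, ex_derive_n (fun z => u z s) k y) ->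
  (* phi0 in C^1(T) *)
  C1T phi0 ->
  (* initial data of the grid CIP scheme *)
  (forall j, (j < M)%nat -> F 0%nat j = phi0 (x j) /\ G 0%nat j = Derive phi0 (x j)) ->
  (* update of the grid CIP scheme *)
  (forall n j, (n < N)%nat -> (j < M)%nat ->
     F (S n) j = hermite M x (F n) (G n) (fst (Xgrid u t x n j)) /\
     G (S n) j = snd (Xgrid u t x n j)
                 * Derive (hermite M x (F n) (G n)) (fst (Xgrid u t x n j))) ->
  hermite M x (F 0%nat) (G 0%nat) = Ih M x phi0 /\
  forall n, (n < N)%nat ->
    hermite M x (F (S n)) (G (S n))
    = Ih M x (fun y => hermite M x (F n) (G n) (Xmap u t n y)).
Proof.
  intros Ht0 HtN Ht HM Hx0 HxM Hx _ Hsmooth _ Hinit Hstep.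
  split.
  - apply hermite_ext. exact Hinit.
  - intros n Hn. unfold Ih. apply hermite_ext. intros j Hj.
    destruct (Hstep n j Hn Hj) as [HF HG].
    rewrite HF, HG, Xgrid_fst. split; [reflexivity |].
    assert (Hslab : forall s, t n <= s <= t (S n) -> 0 <= s <= T).
    { intros s Hs. rewrite <- Ht0, <- HtN.
      assert (t O <= t n) by (apply (mesh_le N); auto; lia).
      assert (t (S n) <= t N) by (apply (mesh_le N); auto; lia).
      lra. }
    assert (DX : is_derive (Xmap u t n) (x j) (snd (Xgrid u t x n j))).
    { apply is_derive_Xmap; [| left; apply Ht, Hn].
      intros s z Hs. exact (Hsmooth s (Hslab s Hs) 1%nat z). }
    assert (Dphi : forall y, is_derive (hermite M x (F n) (G n)) y
                                       (Derive (hermite M x (F n) (G n)) y)).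
    { intro y. apply Derive_correct, (hermite_in_Vh M x HM Hx0 HxM Hx). }
    symmetry. apply is_derive_unique. exact (is_derive_comp _ _ _ _ _ (Dphi _) DX).
Qed.
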